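(* Let $c, d \geq 1$ be integers, $n = cd$ and $\lambda = (c^d)$. Define $$A_c(d) = \sum_{\tilde\lambda \in \mathrm{Ev}(\lambda)} \chi^{(n,n)}_{\tilde\lambda},$$ where the sum runs over the multiset $\mathrm{Ev}(\lambda)$ with multiplicity. Then $A_c(d) = 2^d R(d)$ if $c=1$, and $A_c(d) = 2^d T(d)$ if $c>1$.
   Context: For partitions $\mu,\nu$ of $m$, $\chi^\mu_\nu$ is the value of the irreducible complex character of the symmetric group $\Sigma_m$ indexed by $\mu$ on a permutation of cycle type $\nu$. For a partition $\lambda=(\lambda_1,\dots,\lambda_r)$ of $n$ with $r$ nonzero parts, $\mathrm{Ev}(\lambda)$ is the multiset of $2^r$ partitions of $2n$ obtained by choosing, for each $i=1,\dots,r$ independently, to replace $\lambda_i$ either by the single part $2\lambda_i$ or by two parts $\lambda_i,\lambda_i$, and then sorting the parts in nonincreasing order (each of the $2^r$ choices contributes one element). $R(d)$ is the $d$-th Riordan number (the number of Motzkin paths of length $d$ — lattice paths from $(0,0)$ to $(d,0)$ with steps $(1,1),(1,0),(1,-1)$ never going below the $x$-axis — with no flat step on the $x$-axis). $T(d)$ is the central trinomial coefficient, the coefficient of $x^d$ in $(1+x+x^2)^d$. *)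

From HB Require Import structures.
From mathcomp Require Import all_boot all_order all_algebra.
From mathcomp Require Import mpoly.
Set Implicit Arguments. Unset Strict Implicit. Unset Printing Implicit Defensive.
Import Order.TTheory GRing.Theory Num.Theory.

Definition is_partition (s : seq nat) : bool :=
  sorted geq s && all (fun k => 0 < k) s.

Local Open Scope ring_scope.

Definition psum (l k : nat) : {mpoly int[l]} := \sum_(i < l) 'X_i ^+ k.

Definition vdm (l : nat) : {mpoly int[l]} :=
  \prod_(i < l) \prod_(j < l | (i < j)%N) ('X_i - 'X_j).

(* Frobenius' formula for the irreducible character of the symmetric group:
   chi^mu_nu = coefficient of x^(mu + delta) in a_delta * p_nu,
   computed with l = size mu variables, delta = (l-1, ..., 1, 0). *)
Definition sym_char (mu nu : seq nat) : int :=
  let l := size mu in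
  (vdm l * \prod_(k <- nu) psum l k)@_[multinom (nth 0%N mu i + (l - 1 - i))%N | i < l].

(* Ev(lambda): multiset (as a list, with multiplicity) of the 2^r
   partitions of 2n obtained by replacing each part lambda_i either by
   2 lambda_i or by lambda_i, lambda_i, then sorting. *)
Fixpoint ev_raw (lam : seq nat) : seq (seq nat) :=
  match lam with
  | [::] => [:: [::]]
  | x :: l => [seq (x.*2)%N :: s | s <- ev_raw l] ++ [seq x :: x :: s | s <- ev_raw l]
  end.
Definition Ev (lam : seq nat) : seq (seq nat) := [seq sort geq s | s <- ev_raw lam].

Definition A_c (c d : nat) : int :=
  \sum_(nu <- Ev (nseq d c)) sym_char [:: (c * d)%N; (c * d)%N] nu.

(* Motzkin paths: steps coded in 'I_3 as 0 = down (1,-1), 1 = flat (1,0),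
   2 = up (1,1).  riordan_ok h s: starting at height h, the path s never
   goes below the axis, has no flat step on the axis, and ends at height 0. *)
Fixpoint riordan_ok (h : nat) (s : seq 'I_3) : bool :=
  match s with
  | [::] => h == 0%N
  | x :: s' =>
      if val x == 0%N then (0 < h)%N && riordan_ok h.-1 s'
      else if val x == 1%N then (0 < h)%N && riordan_ok h s'
      else riordan_ok h.+1 s'
  end.
Definition riordan (d : nat) : nat := #|[pred p : d.-tuple 'I_3 | riordan_ok 0 p]|.

Definition central_trinomial (d : nat) : int :=
  ((1 + 'X + 'X^2 : {poly int}) ^+ d)`_d.

From HB Require Import structures.
From mathcomp Require Import all_boot all_order all_algebra.
From mathcomp Require Import mpoly.
From mathcomp Require Import zify ring.
Set Implicit Arguments. Unset Strict Implicit. Unset Printing Implicit Defensive.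
Import Order.TTheory GRing.Theory Num.Theory.

(* In two variables, Frobenius' formula gives chi^(n,n)_nu = [x^n] Q - [x^(n+1)] Q
   with Q = prod_i (1 + x^nu_i) = p_nu(x, 1).  Summing Q over Ev(lambda), each part
   a of lambda contributes (1 + x^2a) + (1 + x^a)^2 = 2 (1 + x^a + x^2a), so for
   lambda = (c^d) we get A_c(d) = 2^d ([x^cd] - [x^(cd+1)]) (1 + x^c + x^2c)^d.
   For c > 1 the second coefficient vanishes and the first is T(d).  For c = 1 it
   is t_d(0) - t_d(1), where t_d(j) = [x^j] (x^-1 + 1 + x)^d; the number of Riordan
   paths of length d from height h satisfies the same recursion in d as
   t_d(h) - t_d(h+1), the symmetry t_d(-1) = t_d(1) accounting for the forbidden
   step below height 0. *)

Local Open Scope ring_scope.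

Lemma big_tuple_cons (R : Type) (idx : R) (op : Monoid.com_law idx)
    (T : finType) n (F : n.+1.-tuple T -> R) :
  \big[op/idx]_(t : n.+1.-tuple T) F t =
  \big[op/idx]_(x : T) \big[op/idx]_(t : n.-tuple T) F [tuple of x :: t].
Proof.
rewrite pair_big /= (reindex (fun p : T * n.-tuple T => [tuple of p.1 :: p.2])) //.
exists (fun t => (thead t, [tuple of behead t])).
  by move=> [x t] _; rewrite theadE; congr (_, _); apply: val_inj.
by move=> t _; rewrite [RHS]tuple_eta; apply: val_inj.
Qed.

Lemma big_ord2 (R : Type) (idx : R) (op : Monoid.law idx) (F : 'I_2 -> R) :
  \big[op/idx]_(i < 2) F i = op (F ord0) (F ord_max).
Proof. by rewrite big_ord_recr big_ord1; congr (op (F _) _); apply: val_inj. Qed.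

(* [trinomial d j] is the coefficient of x^j in (x^-1 + 1 + x)^d. *)
Fixpoint trinomial (d : nat) (j : int) : int :=
  if d is d'.+1 then trinomial d' (j - 1) + trinomial d' j + trinomial d' (j + 1)
  else (j == 0)%:R.

Lemma trinomialN d j : trinomial d (- j) = trinomial d j.
Proof.
elim: d j => [|d IHd] j /=; first by rewrite oppr_eq0.
have -> : - j + 1 = - (j - 1) by rewrite opprB addrC.
rewrite -opprD !IHd; ring.
Qed.

Definition trinomial_poly : {poly int} := 1 + 'X + 'X^2.

Lemma coef_XnM_trinomial_poly d k i :
  ('X^k * trinomial_poly ^+ d)`_i = trinomial d (i%:Z - k%:Z - d%:Z).
Proof.
elim: d k => [|d IHd] k.
  rewrite expr0 mulr1 coefXn subr0 /=; congr (_%:R).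
  by apply/eqP/eqP; lia.
rewrite exprS {1}/trinomial_poly !mulrDl !mulrDr mul1r !mulrA -!exprSr.
have addr_rev (x y z : int) : x + y + z = z + y + x by ring.
rewrite !coefD !IHd [LHS]addr_rev.
by congr (_ + _ + _); congr (trinomial _ _); lia.
Qed.

Lemma coef_trinomial_poly d i : (trinomial_poly ^+ d)`_i = trinomial d (i%:Z - d%:Z).
Proof. by rewrite -[_ ^+ d]mul1r -(expr0 'X) coef_XnM_trinomial_poly subr0. Qed.

Definition riordan_paths (d h : nat) : nat :=
  #|[pred p : d.-tuple 'I_3 | riordan_ok h p]|.

Lemma riordan_paths_sum d h :
  riordan_paths d h = (\sum_(p : d.-tuple 'I_3) riordan_ok h p)%N.
Proof.
rewrite /riordan_paths -sum1_card big_mkcond /=.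
by apply: eq_bigr => p _; rewrite inE; case: riordan_ok.
Qed.

Lemma riordan_paths0 h : riordan_paths 0 h = (h == 0)%N.
Proof.
rewrite riordan_paths_sum (eq_bigr (fun _ => (h == 0)%N : nat)) => [|t _].
  by rewrite sum_nat_const card_tuple expn0 mul1n.
by rewrite tuple0.
Qed.

Lemma riordan_pathsS d h :
  riordan_paths d.+1 h =
  ((0 < h) * (riordan_paths d h.-1 + riordan_paths d h) + riordan_paths d h.+1)%N.
Proof.
rewrite !riordan_paths_sum big_tuple_cons !big_ord_recl big_ord0 /= addn0 addnA.
rewrite mulnDr !big_distrr; congr (_ + _ + _); by apply: eq_bigr => t _; rewrite /= mulnb.
Qed.

Lemma riordan_paths_trinomial d h :
  (riordan_paths d h)%:Z = trinomial d h - trinomial d (h%:Z + 1).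
Proof.
elim: d h => [|d IHd] [|h]; rewrite ?riordan_paths0 ?riordan_pathsS //=.
  have -> : trinomial d (0 - 1) = trinomial d 1 by rewrite sub0r trinomialN.
  by rewrite mul0n add0n IHd; ring.
rewrite mul1n !PoszD !IHd.
have -> : h.+1%:Z - 1 = h by lia.
have -> : h.+1%:Z + 1 - 1 = h.+1 by lia.
have -> : h.+2%:Z = h.+1%:Z + 1 by lia.
have -> : h.+1%:Z = h%:Z + 1 by lia.
ring.
Qed.

Lemma riordan_trinomial d : (riordan d)%:Z = trinomial d 0 - trinomial d 1.
Proof. exact: riordan_paths_trinomial. Qed.

Lemma mcoeffMX_if (R : nzRingType) n (p : {mpoly R[n]}) m k :
  (p * 'X_[m])@_k = if (m <= k)%MM then p@_(k - m) else 0.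
Proof.
case: ifP => [m_le_k|m_nle_k]; first by rewrite -{1}(submK m_le_k) addmC mcoeffMX.
apply/eqP; rewrite mcoeff_eq0 (perm_mem (msuppMX p m)).
by apply/mapP => -[m' _ k_eq]; rewrite k_eq lem_addr in m_nle_k.
Qed.

Lemma lem_mulmnU n (i : 'I_n) k (m : 'X_{1..n}) : (U_(i) *+ k <= m)%MM = (k <= m i)%N.
Proof.
apply/mnm_lepP/idP => [/(_ i)|k_le j]; first by rewrite mulmnE mnm1E eqxx mul1n.
by rewrite mulmnE mnm1E; case: eqP => [<-|_]; rewrite ?mul1n.
Qed.

Lemma mnm2_eq0 (m : 'X_{1..2}) : (m == 0%MM) = (m ord0 + m ord_max == 0)%N.
Proof. by rewrite -mdeg_eq0 mdegE big_ord2. Qed.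

Lemma psum2 k : psum 2 k = 'X_[U_(ord0) *+ k] + 'X_[U_(ord_max) *+ k].
Proof. by rewrite /psum big_ord2 -!mpolyXn. Qed.

(* The power sum p_nu evaluated at (x, 1). *)
Definition psum_poly (nu : seq nat) : {poly int} := \prod_(k <- nu) (1 + 'X^k).

Lemma coef_psum_poly_eq0 nu j : (sumn nu < j)%N -> (psum_poly nu)`_j = 0.
Proof.
elim: nu j => [|k nu IHnu] j /= j_gt; first by rewrite /psum_poly big_nil coefC; case: j j_gt.
rewrite /psum_poly big_cons mulrDl mul1r coefD coefXnM !IHnu; try lia.
by case: ltnP => // _; rewrite IHnu; lia.
Qed.

Lemma vdm2 : vdm 2 = 'X_ord0 - 'X_ord_max.
Proof.
by rewrite /vdm big_ord2 big_mkcond big_ord2 /= mul1r big_mkcond big_ord2 /= !mulr1.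
Qed.

Lemma mcoeff_prod_psum2 nu (m : 'X_{1..2}) :
  (\prod_(k <- nu) psum 2 k)@_m =
  if (m ord0 + m ord_max == sumn nu)%N then (psum_poly nu)`_(m ord0) else 0.
Proof.
elim: nu m => [|k nu IHnu] m.
  rewrite big_nil mcoeff1 mnm2_eq0 /psum_poly big_nil coef1 /=.
  by case: eqP => // ab0; rewrite (_ : m ord0 = 0)%N //; lia.
rewrite big_cons mulrC psum2 mulrDr mcoeffD !mcoeffMX_if !lem_mulmnU !IHnu.
rewrite !mnmBE !mulmnE !mnm1E /psum_poly big_cons mulrDl mul1r coefD coefXnM -/(psum_poly nu) /=.
rewrite !mul1n !mul0n !subn0; move: (m ord0) (m ord_max) => a b.
have Qa_eq0 : (sumn nu < a)%N -> (psum_poly nu)`_a = 0 by apply: coef_psum_poly_eq0.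
case: (ltnP a k) => [ak|ka]; case: ltnP => [bk|kb]; case: eqP => ab;
  rewrite ?addr0 ?add0r; repeat case: eqP => ?; try lia.
(* In the two remaining cases a exceeds the degree sumn nu. *)
- by rewrite Qa_eq0 //; lia.
- by rewrite Qa_eq0 ?add0r //; lia.
Qed.

Lemma sym_char_two_row n nu : (0 < n)%N -> sumn nu = n.*2 ->
  sym_char [:: n; n] nu = (psum_poly nu)`_n - (psum_poly nu)`_n.+1.
Proof.
move=> n_gt0 nu_sum; rewrite /sym_char /= vdm2 mulrBl mcoeffB.
rewrite ![_ * \prod_(_ <- _) _]mulrC.
rewrite -[('X_ord0 : {mpoly int[2]})]expr1 -[('X_ord_max : {mpoly int[2]})]expr1.
rewrite !mpolyXn !mcoeffMX_if !lem_mulmnU !mcoeff_prod_psum2.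
rewrite !mnmBE !mulmnE !mnm1E !mnmE /= nu_sum !ifT; try lia.
by congr (_ - _); congr (_ `_ _); lia.
Qed.

Lemma ev_raw_sumn lam s : s \in ev_raw lam -> sumn s = (sumn lam).*2.
Proof.
elim: lam s => [|x lam IHlam] s /=; first by rewrite inE => /eqP ->.
by rewrite mem_cat => /orP[] /mapP[t /IHlam t_sum ->] /=; rewrite t_sum; lia.
Qed.

Lemma sum_psum_poly_ev_raw lam :
  \sum_(s <- ev_raw lam) psum_poly s = \prod_(x <- lam) (2 * (trinomial_poly \Po 'X^x)).
Proof.
elim: lam => [|x lam IHlam] /=; first by rewrite big_seq1 /psum_poly !big_nil.
have split_part : (1 + 'X^(x.*2)) + (1 + 'X^x) ^+ 2 = 2 * (trinomial_poly \Po 'X^x).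
  by rewrite /trinomial_poly !rmorphD rmorph1 rmorphXn /= comp_polyX -muln2 exprM; ring.
rewrite big_cons -split_part -IHlam big_cat !big_map mulrDl !mulr_sumr.
by congr (_ + _); apply: eq_bigr => s _; rewrite /psum_poly !big_cons // expr2 mulrA.
Qed.

Lemma A_cE c d : (0 < c * d)%N ->
  A_c c d = (2 ^ d)%N%:Z * (((trinomial_poly \Po 'X^c) ^+ d)`_(c * d)
                            - ((trinomial_poly \Po 'X^c) ^+ d)`_(c * d).+1).
Proof.
move=> cd_gt0; rewrite /A_c /Ev big_map.
rewrite (eq_big_seq (fun s => (psum_poly s)`_(c * d) - (psum_poly s)`_(c * d).+1)).
  rewrite sumrB -!coef_sum sum_psum_poly_ev_raw big_nseq iter_mulr_1 exprMn.
  by rewrite -natrX mulr_natl !coefMn -mulrnBl -mulr_natl natz.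
move=> s s_ev; have sort_s := permEl (perm_sort geq s).
rewrite sym_char_two_row //; last by rewrite (perm_sumn sort_s) (ev_raw_sumn s_ev) sumn_nseq mulnC.
by rewrite /psum_poly !(perm_big _ sort_s).
Qed.

Theorem theorem5p1 (c d : nat) (hc : (1 <= c)%N) (hd : (1 <= d)%N) :
  (c = 1%N -> A_c c d = (2 ^ d * riordan d)%N%:Z) /\
  ((1 < c)%N -> A_c c d = (2 ^ d)%N%:Z * central_trinomial d).
Proof.
have cd_gt0 : (0 < c * d)%N by rewrite muln_gt0 hc hd.
split=> [c1|c_gt1]; rewrite A_cE //.
  rewrite c1 comp_polyXr mul1n !coef_trinomial_poly PoszM riordan_trinomial.
  by congr (_ * (trinomial _ _ - trinomial _ _)); lia.
rewrite -rmorphXn !coef_comp_poly_Xn /=; try lia.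
have c_ndvd : (c %| (c * d).+1)%N = false.
  by rewrite -addn1 dvdn_addr ?dvdn_mulr // dvdn1; apply/eqP; lia.
by rewrite dvdn_mulr // mulKn ?c_ndvd ?subr0 //; lia.
Qed.
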